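(* Let $n\ge 2$, let $\ket{\Psi}=\frac{1}{\sqrt2}(\ket{0}^{\otimes n}+\ket{1}^{\otimes n})$, and for a real $\theta$ let $R_z(\theta)=\begin{pmatrix}e^{-i\theta/2}&0\\0&e^{i\theta/2}\end{pmatrix}$. For $0\le j\le\lceil\log_2 n\rceil$ consider round $j$: first $R_z(-\pi/2^j)$ is applied to the first qubit of a fresh copy of $\ket{\Psi}$ (producing $\ket{t_j}$); then each of a set $K$ of $k$ players (qubits) applies $R_z(\pi/2^j)$ to his own qubit; then $H^{\otimes n}$ is applied ($H$ the Hadamard gate) and all $n$ qubits are measured in the computational basis, giving $x\in\{0,1\}^n$. Then: (i) if $2\le k\le n$, there exists $j\in\{0,\dots,\lceil\log_2 n\rceil\}$ such that in round $j$ the outcome $x$ has odd Hamming weight with probability $1$ (the state before the Hadamard transforms equals, up to global phase, $\frac{1}{\sqrt2}(\ket{0}^{\otimes n}-\ket{1}^{\otimes n})$); (ii) if $k=1$, then in every round $j$ the outcome $x$ has even Hamming weight with probability $1$ (the state before the Hadamard transforms equals $\ket{\Psi}$ up to global phase).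
   Context: Qubits are indexed by players; an operator applied by a player acts only on that player's tensor factor. The rotations applied in a round act on distinct or identical qubits of the same $n$-qubit state. *)

From HB Require Import structures.
From mathcomp Require Import all_boot all_order all_algebra.
From mathcomp Require Import all_classical all_reals all_analysis.
From mathcomp Require Import complex.
Set Implicit Arguments. Unset Strict Implicit. Unset Printing Implicit Defensive.
Import Order.TTheory GRing.Theory Num.Theory.
Local Open Scope ring_scope.
Local Open Scope complex_scope.

Section Q.
Variable R : realType.
Variable n : nat.

Definition bits := {ffun 'I_n -> bool}.
Definition qstate := bits -> R[i].
(* a single-qubit gate, as its 2x2 matrix indexed by bits: U out in *)
Definition gate := bool -> bool -> R[i].

Definition expi (t : R) : R[i] := (cos t +i* sin t).

Definition Rz (theta : R) : gate := fun a b =>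
  if a == b then (if a then expi (theta / 2) else expi (- (theta / 2))) else 0.

Definition hadamard : gate := fun a b =>
  (if a && b then -1 else 1) / (Num.sqrt 2%:R)%:C.

Definition setbit (x : bits) (q : 'I_n) (b : bool) : bits :=
  [ffun i => if i == q then b else x i].

Definition apply1 (U : gate) (q : 'I_n) (psi : qstate) : qstate :=
  fun x => \sum_(b : bool) U (x q) b * psi (setbit x q b).

Definition apply_on (U : gate) (Q : {set 'I_n}) (psi : qstate) : qstate :=
  foldr (fun i phi => apply1 U i phi) psi (enum Q).

Definition hadamard_all (psi : qstate) : qstate := apply_on hadamard [set: 'I_n] psi.

Definition all0 (x : bits) : bool := [forall i, ~~ x i].
Definition all1 (x : bits) : bool := [forall i, x i].

Definition GHZ : qstate := fun x =>
  if all0 x then (Num.sqrt 2%:R)^-1%:C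
  else if all1 x then (Num.sqrt 2%:R)^-1%:C else 0.

Definition GHZminus : qstate := fun x =>
  if all0 x then (Num.sqrt 2%:R)^-1%:C
  else if all1 x then - (Num.sqrt 2%:R)^-1%:C else 0.

Definition hweight (x : bits) : nat := #|[set i | x i]|.

Definition prob_odd (psi : qstate) : R[i] :=
  \sum_(x : bits | odd (hweight x)) `|psi x| ^+ 2.
Definition prob_even (psi : qstate) : R[i] :=
  \sum_(x : bits | ~~ odd (hweight x)) `|psi x| ^+ 2.

(* round j: R_z(-pi/2^j) on the first qubit q0 of a fresh |Psi> gives |t_j>,
   then every player in K applies R_z(pi/2^j) to his qubit *)
Definition t_state (q0 : 'I_n) (j : nat) : qstate :=
  apply1 (Rz (- (pi / 2%:R ^+ j))) q0 GHZ.
Definition pre_state (q0 : 'I_n) (K : {set 'I_n}) (j : nat) : qstate :=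
  apply_on (Rz (pi / 2%:R ^+ j)) K (t_state q0 j).
Definition final_state (q0 : 'I_n) (K : {set 'I_n}) (j : nat) : qstate :=
  hadamard_all (pre_state q0 K j).

End Q.

(* Every state met in a round is a cat state a|0..0> + b|1..1>, and R_z gates are
   diagonal, so a rotation on any qubit multiplies a by e^{-i t/2} and b by e^{i t/2}.
   In round j, with theta = pi/2^j, the fresh R_z(-theta) on the first qubit cancels one
   of the k players' R_z(theta), so the pre-measurement state is, up to a global phase,
   |0..0> + e^{i (k-1) theta}|1..1> (times 1/sqrt 2).  Writing k-1 = m 2^j with m odd
   (so j <= log2 n) makes this relative phase m pi, i.e. the state |0..0> - |1..1>;
   for k = 1 it is 0 at every round.  Finally H^{(x)n} maps |0..0> +- |1..1> to the
   uniform superposition of the strings of even (resp. odd) Hamming weight. *)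
From HB Require Import structures.
From mathcomp Require Import all_boot all_order all_algebra.
From mathcomp Require Import all_classical all_reals all_analysis.
From mathcomp Require Import complex.
From mathcomp Require Import ring.
Import Order.TTheory GRing.Theory Num.Theory.
Local Open Scope ring_scope.
Local Open Scope complex_scope.
Set Implicit Arguments. Unset Strict Implicit.

Section Phases.
Variable R : realType.

Lemma expiD (a b : R) : expi a * expi b = expi (a + b).
Proof.
rewrite /expi cosD sinD; apply/eqP; rewrite eq_complex /=.
by apply/andP; split; apply/eqP; ring.
Qed.

Lemma expi0 : expi (0 : R) = 1.
Proof. by rewrite /expi cos0 sin0. Qed.

Lemma expipi : expi (pi : R) = -1.
Proof. by rewrite /expi cospi sinpi; apply/eqP; rewrite eq_complex /= oppr0 !eqxx. Qed.

Lemma expiX (a : R) k : expi a ^+ k = expi (k%:R * a).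
Proof.
elim: k => [|k IHk]; first by rewrite expr0 mul0r expi0.
by rewrite exprS IHk expiD -{1}(mul1r a) -mulrDl -natr1 addrC.
Qed.

Lemma norm_expi (a : R) : `|expi a| = 1.
Proof. by rewrite normc_def /= cos2Dsin2 sqrtr1. Qed.

Definition isqrt2 : R[i] := (Num.sqrt 2%:R)^-1%:C.

Lemma sqr_norm_isqrt2 : `|isqrt2| ^+ 2 = 2^-1.
Proof.
rewrite ger0_norm ?ler0c ?invr_ge0 ?sqrtr_ge0 //.
by rewrite /isqrt2 -rmorphXn exprVn sqr_sqrtr ?ler0n // fmorphV /= rmorph_nat.
Qed.

Lemma hadamardE (c d : bool) : hadamard R c d = (if c && d then -1 else 1) * isqrt2.
Proof. by rewrite /hadamard /isqrt2 fmorphV. Qed.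

End Phases.

Section Circuits.
Variable R : realType.
Variable n : nat.

Definition cat_state (a b : R[i]) : qstate R n := fun x =>
  if all0 x then a else if all1 x then b else 0.

Lemma cat_state_scale (c a b : R[i]) :
  (fun x => c * cat_state a b x) = cat_state (c * a) (c * b).
Proof. by apply: funext => x; rewrite /cat_state; case: ifP => //; case: ifP; rewrite ?mulr0. Qed.

Lemma setbit_id (x : bits n) q : setbit x q (x q) = x.
Proof. by apply/ffunP => i; rewrite ffunE; case: eqP => // ->. Qed.

Lemma setbit_same (x : bits n) q b : setbit x q b q = b.
Proof. by rewrite ffunE eqxx. Qed.

Lemma setbit_other (x : bits n) q b i : i != q -> setbit x q b i = x i.
Proof. by rewrite ffunE => /negPf ->. Qed.

Lemma apply1_diag (U : gate R) q (psi : qstate R n) :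
  (forall a b, a != b -> U a b = 0) -> apply1 U q psi = fun x => U (x q) (x q) * psi x.
Proof.
move=> U_diag; apply: funext => x; rewrite /apply1 big_bool /=.
case xq: (x q); first by rewrite (U_diag true false) // mul0r addr0 -xq setbit_id.
by rewrite (U_diag false true) // mul0r add0r -xq setbit_id.
Qed.

Lemma apply1_Rz_cat_state th q (a b : R[i]) :
  apply1 (Rz th) q (cat_state a b) = cat_state (expi (- (th / 2)) * a) (expi (th / 2) * b).
Proof.
rewrite apply1_diag => [|u v]; last by rewrite /Rz => /negbTE ->.
apply: funext => x; rewrite /Rz /cat_state eqxx.
case: (boolP (all0 x)) => [/forallP all0x|_]; first by rewrite (negbTE (all0x q)).
by case: (boolP (all1 x)) => [/forallP -> //|_]; rewrite mulr0.
Qed.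

Lemma apply_on_Rz_cat_state th (Q : {set 'I_n}) (a b : R[i]) :
  apply_on (Rz th) Q (cat_state a b) =
  cat_state (expi (- (th / 2)) ^+ #|Q| * a) (expi (th / 2) ^+ #|Q| * b).
Proof.
rewrite /apply_on cardE; elim: (enum Q) => [|q s IHs] /=; first by rewrite !mul1r.
by rewrite IHs apply1_Rz_cat_state !exprS !mulrA.
Qed.

Definition prod_state (f : 'I_n -> bool -> R[i]) : qstate R n :=
  fun x => \prod_i f i (x i).

Definition gate_act (U : gate R) (v : bool -> R[i]) : bool -> R[i] :=
  fun c => \sum_b U c b * v b.

Lemma apply1_prod_state U q f :
  apply1 U q (prod_state f) =
  prod_state (fun i => if i == q then gate_act U (f i) else f i).
Proof.
apply: funext => x; rewrite /apply1 /prod_state (bigD1 q) //= eqxx.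
rewrite /gate_act mulr_suml; apply: eq_bigr => b _.
rewrite (bigD1 q) //= setbit_same -mulrA; congr (_ * (_ * _)).
by apply: eq_bigr => i /negbTE iq; rewrite iq setbit_other ?iq.
Qed.

Lemma apply_on_prod_state U (Q : {set 'I_n}) f :
  apply_on U Q (prod_state f) =
  prod_state (fun i => if i \in Q then gate_act U (f i) else f i).
Proof.
rewrite /apply_on; under [in RHS]eq_fun do rewrite -mem_enum.
elim: (enum Q) (enum_uniq (mem Q)) => [|q s IHs] /=.
  by move=> _; congr prod_state; apply: funext.
case/andP=> qs /IHs ->; rewrite apply1_prod_state; congr prod_state.
apply: funext => i; rewrite in_cons; case: eqVneq => [->|] //=.
by rewrite (negbTE qs).
Qed.

Lemma apply1_linear U q (a b : R[i]) (psi phi : qstate R n) :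
  apply1 U q (fun x => a * psi x + b * phi x) =
  fun x => a * apply1 U q psi x + b * apply1 U q phi x.
Proof. by apply: funext => x; rewrite /apply1 !big_bool /=; ring. Qed.

Lemma apply_on_linear U (Q : {set 'I_n}) (a b : R[i]) (psi phi : qstate R n) :
  apply_on U Q (fun x => a * psi x + b * phi x) =
  fun x => a * apply_on U Q psi x + b * apply_on U Q phi x.
Proof. by rewrite /apply_on; elim: (enum Q) => //= q s ->; rewrite apply1_linear. Qed.

Lemma prod_indicator (P : pred 'I_n) : \prod_i (P i)%:R = [forall i, P i]%:R :> R[i].
Proof.
case: (boolP [forall i, P i]) => [/forallP allP | /forallPn [i nPi]].
  by apply: big1 => i _; rewrite allP.
by rewrite (bigD1 i) //= (negbTE nPi) mul0r.
Qed.

Lemma cat_state_prod (a b : R[i]) : (0 < n)%N ->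
  cat_state a b = fun x => a * prod_state (fun _ c => (~~ c)%:R) x
                    + b * prod_state (fun _ c => c%:R) x.
Proof.
move=> n_gt0; apply: funext => x; rewrite /prod_state !prod_indicator /cat_state.
rewrite -/(all0 x) -/(all1 x).
case: (boolP (all0 x)) => [all0x|_]; last by case: (all1 x); rewrite ?mulr1 ?mulr0 ?add0r.
suff -> : all1 x = false by rewrite mulr1 mulr0 addr0.
by apply/negbTE/forallPn; exists (Ordinal n_gt0); apply: (forallP all0x).
Qed.

Lemma hadamard_all_cat_state (a b : R[i]) x : (0 < n)%N ->
  hadamard_all (cat_state a b) x = isqrt2 R ^+ n * (a + (-1) ^+ hweight x * b).
Proof.
move=> n_gt0; rewrite cat_state_prod // /hadamard_all apply_on_linear.
rewrite !apply_on_prod_state /prod_state /gate_act.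
under eq_bigr do rewrite finset.in_setT big_bool /= !mulr0 !mulr1 add0r hadamardE andbF mul1r.
under [X in _ + _ * X]eq_bigr do rewrite finset.in_setT big_bool /= !mulr0 !mulr1 addr0 hadamardE andbT.
rewrite prodr_const card_ord big_split /= prodr_const card_ord.
rewrite -big_mkcond /= prodr_const.
have -> : #|[pred i | x i]| = hweight x by rewrite /hweight cardsE.
ring.
Qed.

Definition flipbit (q : 'I_n) (x : bits n) : bits n := setbit x q (~~ x q).

Lemma flipbitK q : involutive (flipbit q).
Proof.
move=> x; apply/ffunP => i; rewrite /flipbit !ffunE eqxx.
by case: eqVneq => [->|]; rewrite ?negbK.
Qed.

Lemma odd_hweight_flipbit q x : odd (hweight (flipbit q x)) = ~~ odd (hweight x).
Proof.
rewrite /hweight.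
have -> : [set i | flipbit q x i] = if x q then [set i | x i] :\ q else q |: [set i | x i].
  apply/setP => i; rewrite /flipbit; case: ifP => xq; rewrite !inE ffunE;
  by case: eqVneq => [->|]; rewrite ?xq.
case: ifP => xq.
  by rewrite (cardsD1 q [set i | x i]) inE xq /= negbK.
by rewrite cardsU1 inE xq.
Qed.

Lemma card_parity (e : bool) : (0 < n)%N ->
  (#|[set x : bits n | odd (hweight x) == e]| * 2 = 2 ^ n)%N.
Proof.
move=> n_gt0; pose q := Ordinal n_gt0.
have same_card : #|[set x : bits n | odd (hweight x) == ~~ e]| =
                   #|[set x : bits n | odd (hweight x) == e]|.
  rewrite -(card_preimset _ (can_inj (flipbitK q))); apply: eq_card => x.
  by rewrite !inE odd_hweight_flipbit; case: (odd _); case: e.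
rewrite muln2 -addnn -{2}same_card.
have -> : [set x : bits n | odd (hweight x) == ~~ e] = ~: [set x | odd (hweight x) == e].
  by apply/setP => x; rewrite !inE; case: (odd _); case: (e).
by rewrite cardsC card_ffun card_bool card_ord.
Qed.

Lemma parity_prob_cat_state (e : bool) (a : R[i]) : (0 < n)%N -> `|a| ^+ 2 = 2^-1 ->
  \sum_(x | odd (hweight x) == e) `|hadamard_all (cat_state a ((-1) ^+ e * a)) x| ^+ 2 = 1.
Proof.
move=> n_gt0 norm_a.
rewrite (eq_bigr (fun _ => (2^-1) ^+ n * 2)) => [|x /eqP parity_x]; last first.
  rewrite hadamard_all_cat_state // -signr_odd parity_x mulrA -signr_addb addbb expr0 mul1r.
  rewrite normrM normrX exprMn -exprM mulnC exprM sqr_norm_isqrt2; congr (_ * _).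
  rewrite -mulr2n -(mulr_natl a 2) normrM exprMn norm_a normr_nat.
  by field.
rewrite (eq_bigl [in [set x : bits n | odd (hweight x) == e]]) => [|x]; last by rewrite inE.
rewrite sumr_const -mulrnAr -mulrnA mulnC card_parity // natrX.
by rewrite -exprMn mulVf ?pnatr_eq0 // expr1n.
Qed.
End Circuits.

Section Rounds.
Variable R : realType.

(* The phase of |1..1> relative to |0..0> after round j with k players. *)
Definition relative_phase (k j : nat) : R := k.-1%:R * (pi / 2%:R ^+ j).

Lemma expi_relative_phase_odd (k j m : nat) :
  odd m -> k.-1 = (m * 2 ^ j)%N -> expi (relative_phase k j) = -1.
Proof.
move=> m_odd km; have -> : relative_phase k j = m%:R * pi.
  by rewrite /relative_phase km natrM natrX; field; rewrite expf_neq0 ?pnatr_eq0.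
by rewrite -expiX expipi -signr_odd m_odd.
Qed.

Lemma half_turn_round (n k : nat) : (1 < k <= n)%N ->
  exists2 j, (j <= up_log 2 n)%N & expi (relative_phase k j) = -1.
Proof.
case/andP => k_gt1 k_le_n; have k1_gt0 : (0 < k.-1)%N by rewrite -subn1 subn_gt0.
have [m m_odd km] := pfactor_coprime (isT : prime 2) k1_gt0.
exists (logn 2 k.-1); last by apply: expi_relative_phase_odd km; rewrite -coprime2n.
rewrite -(leq_exp2l _ _ (isT : (1 < 2)%N)); apply: leq_trans (up_logP n (isT : (1 < 2)%N)).
have m_gt0 : (0 < m)%N by case: m m_odd {km}.
apply: leq_trans (leq_trans (leq_pred k) k_le_n); rewrite [X in (_ <= X)%N]km.
exact: leq_pmull.
Qed.

Lemma pre_state_cat_state (n : nat) (q0 : 'I_n) (K : {set 'I_n}) j : (0 < #|K|)%N ->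
  let phi := relative_phase #|K| j in
  pre_state R q0 K j = cat_state (expi (- (phi / 2)) * isqrt2 R) (expi (phi / 2) * isqrt2 R).
Proof.
move=> K_gt0 phi; rewrite /pre_state /t_state.
have -> : @GHZ R n = cat_state (isqrt2 R) (isqrt2 R) by [].
rewrite apply1_Rz_cat_state apply_on_Rz_cat_state !expiX !mulrA !expiD.
rewrite /phi /relative_phase; case: #|K| K_gt0 => // k _ /=.
have two_pow_neq0 : (2 ^+ j : R) != 0 by rewrite expf_neq0 ?pnatr_eq0.
by congr cat_state; congr (expi _ * _); rewrite -natr1; field.
Qed.

Lemma round_outcome (e : bool) (n : nat) (q0 : 'I_n) (K : {set 'I_n}) j :
  (0 < n)%N -> (0 < #|K|)%N -> expi (relative_phase #|K| j) = (-1) ^+ e ->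
  (exists c : R[i], `|c| = 1 /\
     pre_state R q0 K j = (fun x => c * cat_state (isqrt2 R) ((-1) ^+ e * isqrt2 R) x)) /\
  \sum_(x | odd (hweight x) == e) `|final_state R q0 K j x| ^+ 2 = 1.
Proof.
move=> n_gt0 K_gt0 phase; set c := expi (- (relative_phase #|K| j / 2)).
have pre : pre_state R q0 K j = cat_state (c * isqrt2 R) ((-1) ^+ e * (c * isqrt2 R)).
  by rewrite pre_state_cat_state // -phase mulrA expiD; congr (cat_state _ (expi _ * _)); field.
split; first by exists c; rewrite norm_expi cat_state_scale mulrCA pre.
rewrite /final_state pre parity_prob_cat_state //.
by rewrite normrM norm_expi mul1r sqr_norm_isqrt2.
Qed.

End Rounds.

Theorem mainTheorem7 (R : realType) (n : nat) (q0 : 'I_n) (K : {set 'I_n}) :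
  (2 <= n)%N -> nat_of_ord q0 = 0%N ->
  ((2 <= #|K|)%N ->
     exists j : nat, (j <= up_log 2 n)%N /\
       (exists c : R[i], `|c| = 1 /\
          pre_state R q0 K j = (fun x => c * GHZminus R x)) /\
       prob_odd (final_state R q0 K j) = 1)
  /\
  (#|K| = 1%N ->
     forall j : nat, (j <= up_log 2 n)%N ->
       (exists c : R[i], `|c| = 1 /\
          pre_state R q0 K j = (fun x => c * GHZ R x)) /\
       prob_even (final_state R q0 K j) = 1).
Proof.
move=> n_ge2 _; have n_gt0 : (0 < n)%N by apply: ltnW.
split=> [K_ge2 | K1 j _].
  have K_le_n : (#|K| <= n)%N by rewrite -[n in (_ <= n)%N]card_ord max_card.
  have [j le_j phase] := half_turn_round R (introT andP (conj K_ge2 K_le_n)).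
  have [[c [norm_c pre]] prob] := round_outcome (e := true) q0 n_gt0 (ltnW K_ge2) phase.
  exists j; split => //; split; first by exists c; rewrite expr1 mulN1r in pre.
  by rewrite -prob; apply: eq_bigl => x; rewrite eqb_id.
have phase : expi (relative_phase R #|K| j) = (-1) ^+ false.
  by rewrite K1 /relative_phase mul0r expi0.
have [[c [norm_c pre]] prob] := round_outcome (e := false) q0 n_gt0 (eq_leq (esym K1)) phase.
split; first by exists c; rewrite expr0 mul1r in pre.
by rewrite -prob; apply: eq_bigl => x; rewrite eqbF_neg.
Qed.
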